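(* Let $n\geq4$ and let $U$ be a monomial. Then $x_{n-1}^2U\in G(J(P_n)^2)$ if and only if $U\in G(J(P_{n-2})^2)$.
   Context: For $m\geq1$, $P_m$ is the path graph on vertices $x_1,\ldots,x_m$ with edges $\{x_i,x_{i+1}\}$; $J(P_m)$ is its cover ideal in a polynomial ring over a field, generated by the monomials $\prod_{x\in C}x$ with $C$ a minimal vertex cover of $P_m$; $G(I)$ denotes the set of minimal monomial generators of a monomial ideal $I$. *)

From mathcomp Require Import all_boot.
Set Implicit Arguments. Unset Strict Implicit. Unset Printing Implicit Defensive.

(* Ambient polynomial ring k[x_1,...,x_n]; the ordinal i : 'I_n stands for the
   variable x_(i+1).  A monomial is its exponent vector. *)
Definition monomial (n : nat) := {ffun 'I_n -> nat}.

Definition mon_mul n (u v : monomial n) : monomial n := [ffun i => u i + v i].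

Definition mon_dvd n (u v : monomial n) : Prop := forall i, u i <= v i.

Definition mon_of_set n (C : {set 'I_n}) : monomial n :=
  [ffun i => nat_of_bool (i \in C)].

(* C is a vertex cover of the path P_m on x_1..x_m (m <= n):
   C consists of vertices x_1..x_m and meets every edge {x_k, x_(k+1)}. *)
Definition is_cover n (m : nat) (C : {set 'I_n}) : Prop :=
  (forall i, i \in C -> i.+1 <= m) /\
  (forall i j : 'I_n, val j = (val i).+1 -> val j < m -> (i \in C) \/ (j \in C)).

Definition is_min_cover n (m : nat) (C : {set 'I_n}) : Prop :=
  is_cover m C /\ (forall D : {set 'I_n}, D \proper C -> ~ is_cover m D).

(* u is a monomial of J(P_m)^2, i.e. u is divisible by a product x_C1 x_C2
   of two generators of J(P_m). *)
Definition in_J2 n (m : nat) (u : monomial n) : Prop :=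
  exists C1 C2, is_min_cover m C1 /\ is_min_cover m C2 /\
    mon_dvd (mon_mul (mon_of_set C1) (mon_of_set C2)) u.

(* u belongs to G(J(P_m)^2): a monomial of the ideal that is minimal with respect
   to divisibility among the monomials of the ideal. *)
Definition in_G_J2 n (m : nat) (u : monomial n) : Prop :=
  in_J2 m u /\ (forall v, in_J2 m v -> mon_dvd v u -> v = u).

(* x_k^e * u, with k the 1-based index of the variable *)
Definition mul_var_pow n (k e : nat) (u : monomial n) : monomial n :=
  [ffun i => u i + (if (val i).+1 == k then e else 0)].

From mathcomp Require Import all_boot zify.
Set Implicit Arguments. Unset Strict Implicit.

(* Write a = x_(m+1) and b = x_(m+2).  A vertex cover of P_(m+2) avoiding b contains a,
   and a minimal one containing a avoids b, so C |-> a |: C and D |-> D :\ a are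
   inverse bijections between the minimal covers of P_m and the minimal covers of
   P_(m+2) containing a.  Hence the products x_D1 x_D2 of two generators of J(P_(m+2))
   divisible by a^2 (equivalently, not involving b) are exactly the a^2 x_C1 x_C2 with
   x_C1, x_C2 generators of J(P_m); as a^2 cancels in divisibility, the minimal
   generators of J(P_(m+2))^2 of the form a^2 U correspond to the minimal generators
   U of J(P_m)^2. *)

Lemma cover_notin n m (C : {set 'I_n}) (i : 'I_n) :
  is_cover m C -> m <= val i -> i \notin C.
Proof. by move=> [inC _] +; apply/contraL => /inC /=; lia. Qed.

Definition mon_of_set2 n (C1 C2 : {set 'I_n}) : monomial n :=
  mon_mul (mon_of_set C1) (mon_of_set C2).

Lemma mon_of_set2E n (C1 C2 : {set 'I_n}) i :
  mon_of_set2 C1 C2 i = (i \in C1) + (i \in C2).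
Proof. by rewrite !ffunE. Qed.

Lemma mon_dvd_antisym n (u v : monomial n) : mon_dvd u v -> mon_dvd v u -> u = v.
Proof. by move=> uv vu; apply/ffunP => i; apply/eqP; rewrite eqn_leq uv vu. Qed.

Lemma mul_var_pow_inj n k e : injective (@mul_var_pow n k e).
Proof.
by move=> u v /ffunP eq_uv; apply/ffunP => i; move: (eq_uv i); rewrite !ffunE => /addIn.
Qed.

Lemma mul_var_pow_dvd2 n k e (u v : monomial n) :
  mon_dvd (mul_var_pow k e u) (mul_var_pow k e v) <-> mon_dvd u v.
Proof. by split=> dvd_uv i; move: (dvd_uv i); rewrite !ffunE leq_add2r. Qed.

Lemma in_G_J2P n m (u : monomial n) :
  in_G_J2 m u <->
  (exists C1 C2, [/\ is_min_cover m C1, is_min_cover m C2 & u = mon_of_set2 C1 C2]) /\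
  (forall D1 D2, is_min_cover m D1 -> is_min_cover m D2 ->
     mon_dvd (mon_of_set2 D1 D2) u -> mon_of_set2 D1 D2 = u).
Proof.
have J2_gen (C1 C2 : {set 'I_n}) :
    is_min_cover m C1 -> is_min_cover m C2 -> in_J2 m (mon_of_set2 C1 C2).
  by move=> mC1 mC2; exists C1, C2; do 2!split=> //; move=> i.
split=> [[[C1 [C2 [mC1 [mC2 dvd_u]]]] min_u] | [[C1 [C2 [mC1 mC2 ->]]] min_u]].
  split=> [|D1 D2 mD1 mD2 dvd_Du]; last exact: min_u _ (J2_gen _ _ mD1 mD2) dvd_Du.
  by exists C1, C2; split=> //; apply/esym/min_u => //; apply: J2_gen.
split=> [|v [D1 [D2 [mD1 [mD2 dvd_Dv]]]] dvd_vC]; first exact: J2_gen.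
have dvd_DC : mon_dvd (mon_of_set2 D1 D2) (mon_of_set2 C1 C2).
  by move=> i; apply: leq_trans (dvd_Dv i) (dvd_vC i).
by apply: mon_dvd_antisym dvd_vC _; rewrite -(min_u D1 D2 mD1 mD2 dvd_DC).
Qed.

Section PathTail.

Variables (n m : nat) (a b : 'I_n).
Hypotheses (val_a : val a = m) (val_b : val b = m.+1).

Lemma tail_neq : a != b.
Proof. by apply/eqP => ab; move: val_a; rewrite ab val_b; lia. Qed.

Lemma cover_notin_tail (C : {set 'I_n}) : is_cover m C -> a \notin C /\ b \notin C.
Proof. by move=> covC; rewrite !(cover_notin covC) ?val_a ?val_b. Qed.

Lemma cover_last_edge (C : {set 'I_n}) : is_cover m.+2 C -> b \notin C -> a \in C.
Proof.
move=> [_ cov] bC; case: (cov a b); rewrite ?val_a ?val_b // => bC'.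
by rewrite bC' in bC.
Qed.

Lemma cover_setU1 (C : {set 'I_n}) : is_cover m C -> is_cover m.+2 (a |: C).
Proof.
move=> [inC cov]; split=> [i /setU1P [->|/inC /=]|i j ji jm]; [by rewrite val_a | lia |].
have [j_lt_m|] := ltnP (val j) m.
  by case: (cov i j ji j_lt_m) => iC; [left|right]; rewrite in_setU1 iC orbT.
rewrite leq_eqVlt => /orP [/eqP mj|m_lt_j].
  by right; rewrite in_setU1 (_ : j = a) ?eqxx //; apply/val_inj; rewrite val_a.
by left; rewrite in_setU1 (_ : i = a) ?eqxx //; apply/val_inj; rewrite val_a; lia.
Qed.

Lemma cover_setD1 (C : {set 'I_n}) :
  is_cover m.+2 C -> b \notin C -> is_cover m (C :\ a).
Proof.
move=> [inC cov] bC; split=> [i /setD1P [ia iC]|i j ji jm].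
  have ib : i != b by apply: contraNneq bC => <-.
  move: (inC i iC) ia ib; rewrite -!(inj_eq val_inj) val_a val_b /=; lia.
have ia : i != a by apply/eqP => ia; move: ji jm; rewrite ia val_a; lia.
have ja : j != a by apply/eqP => ja; move: jm; rewrite ja val_a; lia.
by case: (cov i j ji ltac:(lia)); [left|right]; apply/setD1P.
Qed.

Lemma min_cover_last_edge (C : {set 'I_n}) :
  is_min_cover m.+2 C -> a \in C -> b \notin C.
Proof.
move=> [[inC cov] minC] aC; apply/negP => bC.
apply: (minC (C :\ b) (properD1 bC)); split=> [i /setD1P [_ /inC] //|i j ji jm].
case: (cov i j ji jm) => [iC|jC].
  left; apply/setD1P; split=> //.
  by apply/eqP => ib; move: ji jm; rewrite ib val_b; lia.
have [jb|jb] := eqVneq j b; last by right; apply/setD1P.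
left; rewrite (_ : i = a); first by rewrite in_setD1 tail_neq.
by apply/val_inj; move: ji; rewrite jb val_b val_a => -[].
Qed.

Lemma min_cover_setU1 (C : {set 'I_n}) :
  is_min_cover m C -> is_min_cover m.+2 (a |: C).
Proof.
move=> [covC minC]; split; first exact: cover_setU1.
have bC : b \notin a |: C.
  by rewrite in_setU1 negb_or eq_sym tail_neq; case: (cover_notin_tail covC).
move=> D /properP [DaC [x xaC xD]] covD.
have bD : b \notin D by apply: contra bC; apply: (subsetP DaC).
have aD := cover_last_edge covD bD.
apply: (minC (D :\ a)); last exact: cover_setD1.
apply/properP; split.
  apply/subsetP => y /setD1P [ya /(subsetP DaC)].
  by rewrite in_setU1 (negbTE ya).
exists x; last by rewrite in_setD1 (negbTE xD) andbF.
by move: xaC; rewrite in_setU1 => /orP [/eqP xa|//]; rewrite xa aD in xD.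
Qed.

Lemma min_cover_setD1 (C : {set 'I_n}) :
  is_min_cover m.+2 C -> a \in C -> is_min_cover m (C :\ a).
Proof.
move=> minC aC; have bC := min_cover_last_edge minC aC.
split=> [|D /properP [DCa [x xCa xD]] covD]; first exact: cover_setD1 minC.1 bC.
apply: minC.2 (a |: D) _ (cover_setU1 covD).
apply/properP; split.
  by apply/subsetP => y /setU1P [->//|/(subsetP DCa) /setD1P []].
move: xCa => /setD1P [xa xC]; exists x => //.
by rewrite in_setU1 (negbTE xa) (negbTE xD).
Qed.

Lemma mul_var_powE e (u : monomial n) i :
  mul_var_pow m.+1 e u i = u i + (if i == a then e else 0).
Proof. by rewrite ffunE -(inj_eq val_inj) val_a eqSS. Qed.

Lemma mon_of_set2_setU1 (C1 C2 : {set 'I_n}) : a \notin C1 -> a \notin C2 ->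
  mon_of_set2 (a |: C1) (a |: C2) = mul_var_pow m.+1 2 (mon_of_set2 C1 C2).
Proof.
move=> aC1 aC2; apply/ffunP => i.
rewrite mul_var_powE !mon_of_set2E !in_setU1.
by have [->|] := eqVneq i a; rewrite ?(negbTE aC1) ?(negbTE aC2) ?addn0.
Qed.

Lemma mon_of_set2_setD1 (D1 D2 : {set 'I_n}) : a \in D1 -> a \in D2 ->
  mon_of_set2 D1 D2 = mul_var_pow m.+1 2 (mon_of_set2 (D1 :\ a) (D2 :\ a)).
Proof. by move=> aD1 aD2; rewrite -mon_of_set2_setU1 ?setD11 ?setD1K. Qed.

Lemma in_G_J2_mul_var_pow (U : monomial n) :
  in_G_J2 m.+2 (mul_var_pow m.+1 2 U) <-> in_G_J2 m U.
Proof.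
rewrite !in_G_J2P; split.
- move=> [[D1 [D2 [mD1 mD2 eW]]] min_W].
  have [aD1 aD2] : a \in D1 /\ a \in D2.
    move/ffunP/(_ a): eW; rewrite mul_var_powE mon_of_set2E eqxx.
    by case: (a \in D1); case: (a \in D2) => /=; lia.
  have eU : U = mon_of_set2 (D1 :\ a) (D2 :\ a).
    by apply: (@mul_var_pow_inj _ m.+1 2); rewrite -mon_of_set2_setD1.
  split; first by exists (D1 :\ a), (D2 :\ a); split=> //; apply: min_cover_setD1.
  move=> C1 C2 mC1 mC2 dvd_CU; apply: (@mul_var_pow_inj _ m.+1 2).
  have [[aC1 bC1] [aC2 bC2]] := (cover_notin_tail mC1.1, cover_notin_tail mC2.1).
  rewrite -mon_of_set2_setU1 //; apply: min_W; try exact: min_cover_setU1.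
  by rewrite mon_of_set2_setU1 //; apply/mul_var_pow_dvd2.
- move=> [[C1 [C2 [mC1 mC2 eU]]] min_U].
  have [[aC1 bC1] [aC2 bC2]] := (cover_notin_tail mC1.1, cover_notin_tail mC2.1).
  split.
    exists (a |: C1), (a |: C2); rewrite eU mon_of_set2_setU1 //.
    by split=> //; apply: min_cover_setU1.
  move=> D1 D2 mD1 mD2 dvd_DW.
  have [bD1 bD2] : b \notin D1 /\ b \notin D2.
    move: (dvd_DW b); rewrite mul_var_powE eU !mon_of_set2E eq_sym (negbTE tail_neq).
    rewrite (negbTE bC1) (negbTE bC2).
    by case: (b \in D1); case: (b \in D2).
  have aD1 := cover_last_edge mD1.1 bD1; have aD2 := cover_last_edge mD2.1 bD2.
  rewrite mon_of_set2_setD1 //; congr (mul_var_pow _ _ _); apply: min_U.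
  + exact: min_cover_setD1.
  + exact: min_cover_setD1.
  + by apply/(@mul_var_pow_dvd2 _ m.+1 2); rewrite -mon_of_set2_setD1.
Qed.

End PathTail.

Theorem lemma3p8 (n : nat) (U : monomial n) :
  4 <= n ->
  (in_G_J2 n (mul_var_pow (n - 1) 2 U) <-> in_G_J2 (n - 2) U).
Proof.
case: n U => [|[|m]] U // _; rewrite !subSS !subn0.
have val_a : val (Ordinal (leqW (ltnSn m)) : 'I_m.+2) = m by [].
exact: (in_G_J2_mul_var_pow val_a (erefl : val (@ord_max m.+1) = m.+1)).
Qed.
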